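(* Let $X$ be a space with a binary normal closed subbase $\mathcal S$, let $Z$ be an arbitrary space, and let $\Phi\colon Z\to X$ be an $\mathcal S$-continuous set-valued map such that each $\Phi(z)\subset X$ is (nonempty and) closed. Then the set-valued map $\Psi\colon Z\to X$, $\Psi(z)=I_{\mathcal S}(\Phi(z))$, has a continuous single-valued selection, i.e. a continuous $h\colon Z\to X$ with $h(z)\in\Psi(z)$ for all $z\in Z$.
   Context: All spaces are Tychonoff; set-valued maps have nonempty values. A family $\mathcal S$ of closed subsets of $X$ is a closed subbase if every closed subset of $X$ is an intersection of finite unions of members of $\mathcal S$. A family of sets is linked if any two members intersect; $\mathcal S$ is binary if every linked subfamily of $\mathcal S$ has nonempty intersection. $\mathcal S$ is normal if for every disjoint $S_0,S_1\in\mathcal S$ there exist $T_0,T_1\in\mathcal S$ with $S_0\cap T_1=\varnothing=T_0\cap S_1$ and $T_0\cup T_1=X$. For $B\subset X$, $I_{\mathcal S}(B)=\bigcap\{S\in\mathcal S:B\subset S\}$. A set-valued map $\Phi\colon Z\to X$ is $\mathcal S$-continuous if for every $S\in\mathcal S$ both $\{z:\Phi(z)\cap(X\setminus S)\neq\varnothing\}$ and $\{z:\Phi(z)\subset X\setminus S\}$ are open in $Z$. *)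

From HB Require Import structures.
From mathcomp Require Import all_boot all_order.
From mathcomp Require Import all_classical all_reals all_analysis.
Set Implicit Arguments. Unset Strict Implicit. Unset Printing Implicit Defensive.
Local Open Scope classical_set_scope.

Definition tychonoff_space (T : topologicalType) : Prop :=
  completely_regular_space T /\ hausdorff_space T.

Definition finite_unions (X : Type) (S : set (set X)) : set (set X) :=
  [set B | exists s : seq (set X),
     (forall A, A \in s -> S A) /\ B = \big[setU/set0]_(A <- s) A].

Definition closed_subbase (X : topologicalType) (S : set (set X)) : Prop :=
  (forall A, S A -> closed A) /\
  (forall F : set X, closed F ->
     exists G : set (set X), G `<=` finite_unions S /\ F = \bigcap_(B in G) B).

Definition linked (X : Type) (L : set (set X)) : Prop :=
  forall A B, L A -> L B -> A `&` B !=set0.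

Definition binary (X : Type) (S : set (set X)) : Prop :=
  forall L, L `<=` S -> linked L -> \bigcap_(A in L) A !=set0.

Definition normal_family (X : Type) (S : set (set X)) : Prop :=
  forall S0 S1, S S0 -> S S1 -> S0 `&` S1 = set0 ->
    exists T0 T1, [/\ S T0, S T1, S0 `&` T1 = set0, T0 `&` S1 = set0
                    & T0 `|` T1 = setT].

Definition I_S (X : Type) (S : set (set X)) (B : set X) : set X :=
  \bigcap_(A in [set A | S A /\ B `<=` A]) A.

Definition S_continuous (Z X : topologicalType) (S : set (set X))
    (Phi : Z -> set X) : Prop :=
  forall A, S A ->
    open [set z | Phi z `&` ~` A !=set0] /\ open [set z | Phi z `<=` ~` A].

From HB Require Import structures.
From mathcomp Require Import all_boot all_order.
From mathcomp Require Import all_classical all_reals all_analysis.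
Set Implicit Arguments. Unset Strict Implicit. Unset Printing Implicit Defensive.
Local Open Scope classical_set_scope.

(* Fix a point [a] of [X].  For nonempty [Y], the members of [S] that contain
   [Y], or that contain [a] and meet [I_S S Y], form a linked family; by
   binarity they have a common point, a "gate" of [a] in [Y], and every gate
   lies in [I_S S Y].  Choose [h z] a gate of [a] in [Phi z].  Since [S] is a
   closed subbase, [h] is continuous as soon as [~ A (h z)] for [A] in [S]
   persists near [z].  Binarity and normality give [T0], [T1] in [S] covering
   [X] with [T0] disjoint from [A] and [~ T1 (h z)].  If [T0 a], the lower
   half of S-continuity keeps [h] in [T0] near [z]; if [T1 a], then
   [I_S S (Phi z)] misses [T1], hence so does some member of [S] containing
   [Phi z], and normality plus the upper half of S-continuity conclude. *)

Section ClosedSubbase.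
Variables (Z X : topologicalType) (S : set (set X)).
Hypothesis subbaseS : closed_subbase S.

Lemma closed_subbase_continuous (h : Z -> X) :
  (forall z A, S A -> ~ A (h z) -> \forall z' \near z, ~ A (h z')) ->
  continuous h.
Proof.
move=> h_avoid z O; rewrite nbhsE => -[U [oU Uhz] UO].
have [G [G_unions UC]] := subbaseS.2 _ (open_closedC oU).
have : ~ (\bigcap_(B in G) B) (h z) by rewrite -UC.
move=> /existsNP [B /not_implyP [GB nBhz]].
have [s [sS Bs]] := G_unions B GB; rewrite {B}Bs in GB nBhz.
have near_out : \forall z' \near z, (~` \big[setU/set0]_(A <- s) A) (h z').
  have : (~` \big[setU/set0]_(A <- s) A) (h z) by [].
  rewrite setC_bigsetU big_seq.
  elim/big_ind: _ => [_|B C IB IC [Bhz Chz]|A As].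
  - exact: filterT.
  - by apply: filterI; [exact: IB|exact: IC].
  - exact: h_avoid (sS A As).
apply: filterS near_out => z' nUhz'; apply: UO; apply: contrapT => nU.
have : (~` U) (h z') by [].
by rewrite UC => /(_ _ GB).
Qed.

End ClosedSubbase.

Section Binary.
Variables (X : Type) (S : set (set X)).
Hypothesis binS : binary S.

Lemma binary_inhabited : [set: X] !=set0.
Proof.
have [x _] := @binS set0 (sub0set S) (fun A B (f : set0 A) => False_ind _ f).
by exists x.
Qed.

Lemma binary_disjoint_member (F : set (set X)) (A : set X) :
  F `<=` S -> linked F -> S A -> A !=set0 ->
  A `&` \bigcap_(T in F) T = set0 -> exists T, F T /\ T `&` A = set0.
Proof.
move=> FS linkedF SA A0 A_capF; apply: contrapT => /forallNP noT.
have meetA T : F T -> T `&` A !=set0.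
  by move=> FT; apply/set0P/eqP => TA; exact: (noT T).
have [x FAx] : \bigcap_(T in F `|` [set A]) T !=set0.
  apply: binS => [T [/FS //|-> //]|T T' [FT|->] [FT'|->]].
  - exact: linkedF.
  - exact: meetA.
  - by rewrite setIC; exact: meetA.
  - by rewrite setIid.
suff : (A `&` \bigcap_(T in F) T) x by rewrite A_capF.
by split=> [|T FT]; apply: FAx; [right|left].
Qed.

Lemma I_S_disjoint_member (Y A : set X) :
  S A -> A !=set0 -> Y !=set0 -> A `&` I_S S Y = set0 ->
  exists B, [/\ S B, Y `<=` B & B `&` A = set0].
Proof.
move=> SA A0 [y Yy] AI.
have linkedF : linked [set B | S B /\ Y `<=` B].
  by move=> B B' [_ YB] [_ YB']; exists y; split; [exact: YB|exact: YB'].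
have [B [[SB YB] BA]] :=
  @binary_disjoint_member _ _ (fun B => @proj1 _ _) linkedF SA A0 AI.
by exists B.
Qed.

End Binary.

Lemma I_S_set1 (X : topologicalType) (S : set (set X)) (p : X) :
  accessible_space X -> closed_subbase S -> I_S S [set p] `<=` [set p].
Proof.
move=> T1X [_ subbaseS] q pq; apply: contrapT => qp.
have [G [G_unions pG]] := subbaseS _ (@accessible_closed_set1 _ T1X p).
have : ~ (\bigcap_(B in G) B) q by rewrite -pG.
move=> /existsNP [B /not_implyP [GB nBq]].
have [s [sS Bs]] := G_unions B GB; rewrite {B}Bs in GB nBq.
have : (\bigcap_(B in G) B) p by rewrite -pG.
move=> /(_ _ GB); rewrite -bigcup_seq => -[A As Ap].
apply: nBq; rewrite -bigcup_seq; exists A => //.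
by apply: pq; split; [exact: sS|move=> ? ->].
Qed.

Lemma binary_separate_point (X : topologicalType) (S : set (set X)) p A :
  accessible_space X -> closed_subbase S -> binary S ->
  S A -> A !=set0 -> ~ A p -> exists B, [/\ S B, B p & B `&` A = set0].
Proof.
move=> T1X subbaseS binS SA A0 nAp.
have AI : A `&` I_S S [set p] = set0.
  apply/seteqP; split=> // x [Ax /(I_S_set1 T1X subbaseS) xp].
  by apply: nAp; rewrite -xp.
have [B [SB pB BA]] := I_S_disjoint_member binS SA A0 (ex_intro _ p erefl) AI.
by exists B; split => //; exact: pB.
Qed.

Section Gate.
Variables (X : Type) (S : set (set X)) (a : X).

Definition gate_family (Y : set X) : set (set X) :=
  [set T | S T /\ ((T a /\ T `&` I_S S Y !=set0) \/ Y `<=` T)].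

Definition gate (Y : set X) : set X := \bigcap_(T in gate_family Y) T.

Lemma gate_sub_meet Y T :
  S T -> T a -> T `&` I_S S Y !=set0 -> gate Y `<=` T.
Proof. by move=> ST Ta TY x; apply; split => //; left. Qed.

Lemma gate_sub_sup Y T : S T -> Y `<=` T -> gate Y `<=` T.
Proof. by move=> ST YT x; apply; split => //; right. Qed.

Lemma gate_sub_I_S Y : gate Y `<=` I_S S Y.
Proof. by move=> x gx T [ST YT]; exact: gate_sub_sup gx. Qed.

Lemma gate_neq0 Y : binary S -> Y !=set0 -> gate Y !=set0.
Proof.
move=> binS [y Yy]; apply: binS => [T []//|T T' [ST gT] [ST' gT']].
have sub_I_S B : S B -> Y `<=` B -> I_S S Y `<=` B by move=> SB YB x; apply.
case: gT gT' => [[Ta [x [Tx Yx]]]|YT] [[T'a [x' [T'x' Yx']]]|YT'].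
- by exists a.
- by exists x; split => //; exact: sub_I_S Yx.
- by exists x'; split => //; exact: sub_I_S Yx'.
- by exists y; split; [exact: YT|exact: YT'].
Qed.

End Gate.

Section GateContinuity.
Variables (Z X : topologicalType) (S : set (set X)) (Phi : Z -> set X).
Variables (a : X) (h : Z -> X).
Hypotheses (binS : binary S) (normS : normal_family S).
Hypotheses (contS : S_continuous S Phi) (Phi_neq0 : forall z, Phi z !=set0).
Hypothesis h_gate : forall z, gate S a (Phi z) (h z).
Arguments h_gate : clear implicits.
Arguments Phi_neq0 : clear implicits.

Let cover_r (T0 T1 : set X) x : T0 `|` T1 = setT -> ~ T1 x -> T0 x.
Proof. by move=> T01 nT1x; have [] : (T0 `|` T1) x by rewrite T01. Qed.

Lemma gate_near_T0_of_T0a z T0 T1 :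
  S T0 -> S T1 -> T0 `|` T1 = setT -> T0 a -> ~ T1 (h z) ->
  \forall z' \near z, T0 (h z').
Proof.
move=> ST0 ST1 T01 T0a nT1hz.
apply: (@filterS _ _ _ [set z' | Phi z' `&` ~` T1 !=set0]).
  move=> z' [x [Phix nT1x]]; apply: (gate_sub_meet ST0 T0a _ (h_gate z')).
  by exists x; split; [exact: cover_r nT1x|move=> T [_]; apply].
apply: open_nbhs_nbhs; split; first exact: (contS ST1).1.
apply: contrapT => PhiT1; apply: nT1hz; apply: (gate_sub_sup ST1 _ (h_gate z)).
by move=> x Phix; apply: contrapT => nT1x; apply: PhiT1; exists x.
Qed.

Lemma gate_near_T0_of_T1a z T0 T1 :
  S T0 -> S T1 -> T0 `|` T1 = setT -> T1 a -> ~ T1 (h z) ->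
  \forall z' \near z, T0 (h z').
Proof.
move=> ST0 ST1 T01 T1a nT1hz.
have T1I : T1 `&` I_S S (Phi z) = set0.
  apply/seteqP; split=> // x T1Ix; apply: nT1hz.
  by apply: (gate_sub_meet ST1 T1a _ (h_gate z)); exists x.
have [B [SB PhiB BT1]] :=
  I_S_disjoint_member binS ST1 (ex_intro _ a T1a) (Phi_neq0 z) T1I.
have [U0 [U1 [SU0 SU1 BU1 U0T1 U01]]] := normS SB ST1 BT1.
apply: (@filterS _ _ _ [set z' | Phi z' `<=` ~` U1]).
  move=> z' PhiU1; apply: cover_r T01 _ => T1hz'.
  suff : (U0 `&` T1) (h z') by rewrite U0T1.
  split=> //; apply: (gate_sub_sup SU0 _ (h_gate z')) => x Phix.
  exact: cover_r U01 (PhiU1 x Phix).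
apply: open_nbhs_nbhs; split; first exact: (contS SU1).2.
move=> x Phix U1x; suff : (B `&` U1) x by rewrite BU1.
by split=> //; exact: PhiB.
Qed.

Lemma gate_near_avoid (A : set X) z :
  accessible_space X -> closed_subbase S ->
  S A -> ~ A (h z) -> \forall z' \near z, ~ A (h z').
Proof.
move=> T1X subbaseS SA nAhz.
have [A0|/forallNP A0] := pselect (A !=set0); last first.
  by apply: nearW => z' Ahz'; exact: (A0 (h z')).
have [B [SB Bhz BA]] := binary_separate_point T1X subbaseS binS SA A0 nAhz.
have [T0 [T1 [ST0 ST1 BT1 T0A T01]]] := normS SB SA BA.
have nT1hz : ~ T1 (h z) by move=> T1hz; suff : (B `&` T1) (h z) by rewrite BT1.
have near_T0 : \forall z' \near z, T0 (h z').
  have : (T0 `|` T1) a by rewrite T01.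
  case=> [T0a|T1a].
  - exact: gate_near_T0_of_T0a ST0 ST1 T01 T0a nT1hz.
  - exact: gate_near_T0_of_T1a ST0 ST1 T01 T1a nT1hz.
apply: filterS near_T0 => z' T0hz' Ahz'.
by suff : (T0 `&` A) (h z') by rewrite T0A.
Qed.

End GateContinuity.

Theorem corollary1p2 (X Z : topologicalType) (S : set (set X))
  (Phi : Z -> set X) :
  tychonoff_space X -> tychonoff_space Z ->
  closed_subbase S -> binary S -> normal_family S ->
  S_continuous S Phi ->
  (forall z, Phi z !=set0) -> (forall z, closed (Phi z)) ->
  exists h : Z -> X, continuous h /\ (forall z, I_S S (Phi z) (h z)).
Proof.
move=> [_ hausX] _ subbaseS binS normS contS Phi_neq0 _.
have [a _] := binary_inhabited binS.
have [h h_gate] := choice (fun z => gate_neq0 a binS (Phi_neq0 z)).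
exists h; split; last by move=> z; exact: gate_sub_I_S (h_gate z).
apply: (closed_subbase_continuous subbaseS) => z A SA nAhz.
have T1X : accessible_space X := hausdorff_accessible hausX.
exact: (gate_near_avoid binS normS contS Phi_neq0 h_gate T1X subbaseS SA nAhz).
Qed.
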